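(* Let $d$ be a positive integer, let $F$ be a nonempty Young diagram whose outer boundary is encoded by the type sequence $w$, and let $T$ be a $d$-semistandard $w$-oscillating tableau. Let $\Phi_F(T)$ denote the filling of the unique $d$-RSK growth diagram on $F$ whose partitions along the outer boundary (listed from the point on the positive $x$-axis) are $T$. Then: (1) For each $i$, the sum of the entries in the $i$-th row of $\Phi_F(T)$ equals $\mathrm{wt}^+(T)_i$, and for each $j$, the sum of the entries in the $j$-th column equals $\mathrm{wt}^-(T)_j$. (2) Let $T^{\mathrm{rev}}$ be the reversed sequence, regarded as a $d$-semistandard $w'$-oscillating tableau, where $w'$ is obtained from $w$ by reversing it and interchanging `$+$' and `$-$'; let $F'$ be the reflection of $F$ across $y=x$ (whose outer boundary is encoded by $w'$). Then $\Phi_{F'}(T^{\mathrm{rev}})$ is the reflection of $\Phi_F(T)$ across the line $y=x$. The same properties hold with RSK growth diagrams in place of $d$-RSK growth diagrams and semistandard $w$-oscillating tableaux in place of $d$-semistandard ones.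
   Context: Partitions: finite weakly decreasing sequences of positive integers, $\lambda_i=0$ for $i>\ell(\lambda)$, $|\lambda|=\sum\lambda_i$; $d$-partitions have $\ell\le d$; $\alpha\prec\beta$ (also $\beta\succ\alpha$) means $\beta_1\ge\alpha_1\ge\beta_2\ge\alpha_2\ge\cdots$. Young diagrams lie in the first quadrant with unit cells at integer lattice points, left-justified; row $i$ is the $i$-th row of cells counted upward from the $x$-axis, column $j$ the $j$-th column counted from the $y$-axis. A filling assigns nonnegative integers to cells. The outer boundary is the lattice path of unit up/left steps from the positive $x$-axis to the positive $y$-axis; its type sequence records `$+$' for up steps and `$-$' for left steps. A semistandard $w$-oscillating tableau ($w=w_1\cdots w_r$) is a sequence of partitions $\emptyset=\lambda^{(0)},\ldots,\lambda^{(r)}=\emptyset$ with $\lambda^{(i-1)}\prec\lambda^{(i)}$ if $w_i=+$ and $\lambda^{(i-1)}\succ\lambda^{(i)}$ if $w_i=-$; $d$-semistandard if all are $d$-partitions. Weights: $\mathrm{wt}^+(T)_i=|\lambda^{(a_i)}|-|\lambda^{(a_i-1)}|$ where $a_i$ is the index of the $i$-th `$+$' in $w$; $\mathrm{wt}^-(T)_i=|\lambda^{(b_i-1)}|-|\lambda^{(b_i)}|$ where $b_i$ is the index of the $i$-th-to-last `$-$' in $w$. A growth diagram on $F$: a filling plus a partition at each lattice point, with $\emptyset$ on the coordinate axes, each cell (entry $m$; bottom-left, top-left, bottom-right, top-right corners $\kappa,\mu,\nu,\rho$) satisfying a local rule. RSK rule: $\mu\succ\kappa\prec\nu$, $\mu\prec\rho\succ\nu$,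 $\rho_1=m+\max(\mu_1,\nu_1)$, $\rho_i+\kappa_{i-1}=\min(\mu_{i-1},\nu_{i-1})+\max(\mu_i,\nu_i)$ for $i\ge2$. $d$-RSK rule: all four are $d$-partitions, $\mu\succ\kappa\prec\nu$, $\mu\prec\rho\succ\nu$, $m=0$ or $\kappa_d=0$, $\rho_1+\kappa_d=m+\min(\mu_d,\nu_d)+\max(\mu_1,\nu_1)$, $\rho_i+\kappa_{i-1}=\min(\mu_{i-1},\nu_{i-1})+\max(\mu_i,\nu_i)$ for $2\le i\le d$. It is known (and proved in the paper) that each $d$-semistandard (resp. semistandard) $w$-oscillating tableau placed on the outer boundary extends uniquely to a $d$-RSK (resp. RSK) growth diagram on $F$, so $\Phi_F$ is well defined. *)

From mathcomp Require Import all_boot.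
Set Implicit Arguments. Unset Strict Implicit. Unset Printing Implicit Defensive.

(* ---------- Partitions ----------
   A partition is a seq nat [:: l_1; l_2; ...; l_l] (0-indexed: nth 0 l (i-1) = l_i),
   weakly decreasing with positive entries; l_i = 0 for i > size l is automatic
   since nth 0 returns 0 out of range. *)
Definition is_partition (l : seq nat) : bool :=
  sorted geq l && all (fun a => 0 < a) l.

Definition is_dpartition (d : nat) (l : seq nat) : bool :=
  is_partition l && (size l <= d).

Definition psize (l : seq nat) : nat := sumn l.

Definition prec (a b : seq nat) : Prop :=
  forall i, nth 0 b i.+1 <= nth 0 a i <= nth 0 b i.

(* ---------- Young diagrams ----------
   A Young diagram F is given by its shape lam (a partition): row i (counted
   upward from the x-axis, 1-indexed) has nth 0 lam (i-1) cells.  The cell in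
   row i, column j (1-indexed) is the unit square [j-1,j] x [i-1,i]. *)
Definition cell_F (lam : seq nat) (i j : nat) : bool :=
  (0 < i <= size lam) && (0 < j <= nth 0 lam i.-1).

(* lattice point (x,y) lies in F (closed region) *)
Definition in_F (lam : seq nat) (x y : nat) : bool :=
  (y <= size lam) && (x <= nth 0 lam y.-1).

(* conjugate partition = shape of the reflection of F across y = x *)
Definition conj_part (lam : seq nat) : seq nat :=
  mkseq (fun j => count (fun a => j < a) lam) (head 0 lam).

(* ---------- Outer boundary ----------
   Lattice path of unit up/left steps from (lam_1, 0) to (0, size lam). *)
Definition bstep (lam : seq nat) (p : nat * nat) : nat * nat :=
  let: (x, y) := p in
  if (y < size lam) && (x <= nth 0 lam y) then (x, y.+1) else (x.-1, y).

Definition bpt (lam : seq nat) (k : nat) : nat * nat :=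
  iter k (bstep lam) (head 0 lam, 0).

Definition blen (lam : seq nat) : nat := head 0 lam + size lam.

(* type sequence of the outer boundary: true = '+' (up step), false = '-' (left) *)
Definition bword (lam : seq nat) : seq bool :=
  [seq (bpt lam k).2 < (bpt lam k.+1).2 | k <- iota 0 (blen lam)].

(* ---------- Oscillating tableaux ----------
   T = [:: lambda^(0); ...; lambda^(r)], r = size w; w_i is nth false w (i-1).
   [ispart] = is_partition (semistandard) or is_dpartition d (d-semistandard). *)
Definition osc_tableau (ispart : seq nat -> bool) (w : seq bool) (T : seq (seq nat))
  : Prop :=
  [/\ size T = (size w).+1,
      nth [::] T 0 = [::],
      nth [::] T (size w) = [::],
      (forall k, k <= size w -> ispart (nth [::] T k)) &
      (forall k, k < size w ->
         if nth false w k then prec (nth [::] T k) (nth [::] T k.+1)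
         else prec (nth [::] T k.+1) (nth [::] T k))].

Definition pos_plus (w : seq bool) : seq nat :=
  [seq k <- iota 0 (size w) | nth false w k].
Definition pos_minus (w : seq bool) : seq nat :=
  [seq k <- iota 0 (size w) | ~~ nth false w k].

(* wt^+(T)_i, i >= 1: a_i = (nth 0 (pos_plus w) (i-1)).+1;
   value |lambda^(a_i)| - |lambda^(a_i - 1)| (nonnegative since lambda^(a_i-1) ≺ lambda^(a_i)) *)
Definition wt_plus (w : seq bool) (T : seq (seq nat)) (i : nat) : nat :=
  let k := nth 0 (pos_plus w) i.-1 in
  psize (nth [::] T k.+1) - psize (nth [::] T k).

(* wt^-(T)_i, i >= 1: b_i = index of the i-th-to-last '-';
   value |lambda^(b_i - 1)| - |lambda^(b_i)| *)
Definition wt_minus (w : seq bool) (T : seq (seq nat)) (i : nat) : nat :=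
  let k := nth 0 (rev (pos_minus w)) i.-1 in
  psize (nth [::] T k) - psize (nth [::] T k.+1).

(* ---------- Local rules ----------
   kappa = bottom-left, mu = top-left, nu = bottom-right, rho = top-right, m = entry.
   Parts are 0-indexed: rho_i (paper) = nth 0 rho (i-1). *)
Definition RSK_rule (kappa mu nu rho : seq nat) (m : nat) : Prop :=
  [/\ prec kappa mu /\ prec kappa nu, prec mu rho /\ prec nu rho,
      nth 0 rho 0 = m + maxn (nth 0 mu 0) (nth 0 nu 0) &
      (forall i, nth 0 rho i.+1 + nth 0 kappa i =
                 minn (nth 0 mu i) (nth 0 nu i) + maxn (nth 0 mu i.+1) (nth 0 nu i.+1))].

Definition dRSK_rule (d : nat) (kappa mu nu rho : seq nat) (m : nat) : Prop :=
  [/\ [&& is_dpartition d kappa, is_dpartition d mu,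
          is_dpartition d nu & is_dpartition d rho],
      [/\ prec kappa mu, prec kappa nu, prec mu rho & prec nu rho],
      (m = 0 \/ nth 0 kappa d.-1 = 0),
      nth 0 rho 0 + nth 0 kappa d.-1 =
        m + minn (nth 0 mu d.-1) (nth 0 nu d.-1) + maxn (nth 0 mu 0) (nth 0 nu 0) &
      (forall i, 0 < i < d ->
         nth 0 rho i + nth 0 kappa i.-1 =
         minn (nth 0 mu i.-1) (nth 0 nu i.-1) + maxn (nth 0 mu i) (nth 0 nu i))].

(* ---------- Growth diagrams ----------
   P x y = partition at lattice point (x,y); f i j = entry of the cell in row i,
   column j. *)
Definition growth_diagram (rule : seq nat -> seq nat -> seq nat -> seq nat -> nat -> Prop)
  (ispart : seq nat -> bool) (lam : seq nat)
  (P : nat -> nat -> seq nat) (f : nat -> nat -> nat) : Prop :=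
  [/\ (forall x y, in_F lam x y -> ispart (P x y)),
      (forall x y, in_F lam x y -> (x == 0) || (y == 0) -> P x y = [::]) &
      (forall i j, cell_F lam i j ->
         rule (P j.-1 i.-1) (P j.-1 i) (P j i.-1) (P j i) (f i j))].

Definition boundary_is (lam : seq nat) (P : nat -> nat -> seq nat) (T : seq (seq nat))
  : Prop :=
  forall k, k <= blen lam -> P (bpt lam k).1 (bpt lam k).2 = nth [::] T k.

Definition row_col_sums (lam : seq nat) (w : seq bool) (T : seq (seq nat))
  (f : nat -> nat -> nat) : Prop :=
  (forall i, 0 < i <= size lam ->
     \sum_(1 <= j < (nth 0 lam i.-1).+1) f i j = wt_plus w T i) /\
  (forall j, 0 < j <= head 0 lam ->
     \sum_(1 <= i < (size lam).+1 | j <= nth 0 lam i.-1) f i j = wt_minus w T j).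

Definition prop34_for (rule : seq nat -> seq nat -> seq nat -> seq nat -> nat -> Prop)
  (ispart : seq nat -> bool) : Prop :=
  forall (lam : seq nat) (w : seq bool) (T : seq (seq nat)),
    is_partition lam -> 0 < size lam -> w = bword lam ->
    osc_tableau ispart w T ->
    forall (P : nat -> nat -> seq nat) (f : nat -> nat -> nat),
      growth_diagram rule ispart lam P f -> boundary_is lam P T ->
      row_col_sums lam w T f /\
      (forall (P' : nat -> nat -> seq nat) (f' : nat -> nat -> nat),
         growth_diagram rule ispart (conj_part lam) P' f' ->
         boundary_is (conj_part lam) P' (rev T) ->
         forall i j, cell_F (conj_part lam) i j -> f' i j = f j i).

From mathcomp Require Import all_boot zify.
Set Implicit Arguments. Unset Strict Implicit. Unset Printing Implicit Defensive.

(* Every local rule satisfies |rho| + |kappa| = m + |mu| + |nu|, so along row i of a growth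
   diagram the sizes telescope: the entries of the row add up to |P(L, i)| - |P(L, i-1)|,
   where (L, i-1) and (L, i) are the two ends of the i-th up step of the outer boundary;
   this is wt^+(T)_i, and columns give wt^- in the same way.  Each rule is symmetric in
   mu and nu, so transposing a growth diagram on F gives one on F' whose boundary is
   T^rev; and since a rule determines kappa and m from mu, nu, rho, a growth diagram is
   determined by its boundary (induction towards the axes), which forces
   Phi_F'(T^rev) to be the transpose of Phi_F(T). *)

Lemma nth_sorted_geq (l : seq nat) i j :
  sorted geq l -> i <= j -> nth 0 l j <= nth 0 l i.
Proof.
move=> l_sorted le_ij; case: (ltnP j (size l)) => [lt_j|?]; last by rewrite nth_default.
apply: (sorted_leq_nth (rev_trans leq_trans) leqnn) => //; rewrite inE.
exact: leq_ltn_trans lt_j.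
Qed.

Lemma count_geq_sorted (l : seq nat) y x : sorted geq l -> 0 < y ->
  (x < count (fun a => y <= a) l) = (y <= nth 0 l x).
Proof.
elim: l x => [|a l IHl] x l_sorted y_gt0 /=; first by rewrite nth_nil ltn0 leqNgt y_gt0.
case: (leqP y a) => [le_ya|lt_ay].
  by case: x => [|x] //=; rewrite add1n ltnS IHl // (path_sorted l_sorted).
have below_y : forall b, b \in l -> b < y.
  move/(order_path_min (rev_trans leq_trans))/allP: l_sorted => le_a b /le_a.
  by move/leq_ltn_trans; apply.
have -> : count (fun b => y <= b) l = 0.
  apply/eqP; rewrite -leqn0 leqNgt -has_count.
  by apply/hasP => -[b /below_y]; rewrite ltnNge => /negP.
apply/esym/negbTE; rewrite -ltnNge; apply: leq_ltn_trans lt_ay.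
exact: (nth_sorted_geq l_sorted (leq0n x)).
Qed.

Lemma partition_nth_gt0 (l : seq nat) i :
  is_partition l -> (0 < nth 0 l i) = (i < size l).
Proof.
case/andP=> _ l_pos; case: (ltnP i (size l)) => [lt_i|?]; last by rewrite nth_default.
by move/allP: l_pos; apply; rewrite mem_nth.
Qed.

Lemma partition_eq (a b : seq nat) :
  is_partition a -> is_partition b -> (forall i, nth 0 a i = nth 0 b i) -> a = b.
Proof.
move=> a_part b_part eq_ab.
have lt_size i : (i < size a) = (i < size b).
  by rewrite -(partition_nth_gt0 _ a_part) -(partition_nth_gt0 _ b_part) eq_ab.
apply: (eq_from_nth (x0 := 0)) => [|i _]; last exact: eq_ab.
apply/eqP; rewrite eqn_leq leqNgt (lt_size (size b)) ltnn /=.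
by rewrite leqNgt -(lt_size (size a)) ltnn.
Qed.

Lemma sumn_nth (l : seq nat) n : size l <= n -> sumn l = \sum_(0 <= i < n) nth 0 l i.
Proof.
move=> le_l_n; rewrite sumnE (big_nth 0) (big_nat_widen _ _ _ _ _ le_l_n) big_mkcond /=.
by apply: eq_bigr => i _; case: ltnP => // ?; rewrite nth_default.
Qed.

Section Balance.
Variables (kappa mu nu rho : seq nat) (m n : nat).
Local Notation mn i := (minn (nth 0 mu i) (nth 0 nu i)).
Local Notation mx i := (maxn (nth 0 mu i) (nth 0 nu i)).

Lemma psize_balance :
  size kappa <= n.+1 -> size mu <= n.+1 -> size nu <= n.+1 -> size rho <= n.+1 ->
  nth 0 rho 0 + nth 0 kappa n = m + mn n + mx 0 ->
  (forall i, i < n -> nth 0 rho i.+1 + nth 0 kappa i = mn i + mx i.+1) ->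
  psize rho + psize kappa = m + psize mu + psize nu.
Proof.
move=> ? ? ? ? top step; rewrite /psize !(sumn_nth (n := n.+1)) //.
have min_max : \sum_(0 <= i < n.+1) nth 0 mu i + \sum_(0 <= i < n.+1) nth 0 nu i =
               \sum_(0 <= i < n.+1) mn i + \sum_(0 <= i < n.+1) mx i.
  rewrite -!big_split; apply: eq_bigr => i _; exact/esym/addn_min_max.
have steps : \sum_(0 <= i < n) nth 0 rho i.+1 + \sum_(0 <= i < n) nth 0 kappa i =
             \sum_(0 <= i < n) mn i + \sum_(0 <= i < n) mx i.+1.
  by rewrite -!big_split; apply: eq_big_nat => i /andP[_ /step].
move: min_max; rewrite (big_nat_recl n 0 (fun i => nth 0 rho i)) //.
rewrite (big_nat_recl n 0 (fun i => mx i)) // (big_nat_recr n 0 (fun i => mn i)) //.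
rewrite (big_nat_recr n 0 (fun i => nth 0 kappa i)) //=.
lia.
Qed.

End Balance.

Lemma RSK_rule_balance kappa mu nu rho m : RSK_rule kappa mu nu rho m ->
  psize rho + psize kappa = m + psize mu + psize nu.
Proof.
(* Beyond all the lengths, the RSK rule reads as the d-RSK rule with d = n.+1. *)
case=> _ _ top step; set n := size kappa + size mu + size nu + size rho.
have [kappa_n mu_n] : nth 0 kappa n = 0 /\ nth 0 mu n = 0.
  by split; rewrite nth_default // /n; lia.
apply: (psize_balance (n := n)); try by rewrite /n; lia.
- by rewrite kappa_n mu_n min0n top !addn0.
- by move=> i _; apply: step.
Qed.

Lemma dRSK_rule_balance d kappa mu nu rho m : 0 < d -> dRSK_rule d kappa mu nu rho m ->
  psize rho + psize kappa = m + psize mu + psize nu.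
Proof.
move=> d_gt0 [/and4P[] /andP[_ ?] /andP[_ ?] /andP[_ ?] /andP[_ ?] _ _ top step].
apply: (psize_balance (n := d.-1)); rewrite ?prednK // => i lt_i.
by apply: step; lia.
Qed.

Lemma RSK_rule_sym kappa mu nu rho m :
  RSK_rule kappa mu nu rho m -> RSK_rule kappa nu mu rho m.
Proof.
case=> [[? ?] [? ?] top step]; split => //; first by rewrite maxnC.
by move=> i; rewrite step minnC maxnC.
Qed.

Lemma dRSK_rule_sym d kappa mu nu rho m :
  dRSK_rule d kappa mu nu rho m -> dRSK_rule d kappa nu mu rho m.
Proof.
case=> [/and4P[? ? ? ?] [? ? ? ?] ? top step]; split => //.
- exact/and4P.
- by rewrite minnC maxnC.
- by move=> i lt_i; rewrite step // minnC maxnC.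
Qed.

Lemma RSK_rule_inj kappa1 kappa2 mu nu rho m1 m2 :
  is_partition kappa1 -> is_partition kappa2 ->
  RSK_rule kappa1 mu nu rho m1 -> RSK_rule kappa2 mu nu rho m2 ->
  kappa1 = kappa2 /\ m1 = m2.
Proof.
move=> part1 part2 [_ _ top1 step1] [_ _ top2 step2]; split; last by lia.
by apply: partition_eq => // i; have := step1 i; have := step2 i; lia.
Qed.

Lemma dRSK_rule_inj d kappa1 kappa2 mu nu rho m1 m2 : 0 < d ->
  is_dpartition d kappa1 -> is_dpartition d kappa2 ->
  dRSK_rule d kappa1 mu nu rho m1 -> dRSK_rule d kappa2 mu nu rho m2 ->
  kappa1 = kappa2 /\ m1 = m2.
Proof.
move=> d_gt0 /andP[part1 size1] /andP[part2 size2] [_ _ m1_0 top1 step1] [_ _ m2_0 top2 step2].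
have [last_eq m_eq] : nth 0 kappa1 d.-1 = nth 0 kappa2 d.-1 /\ m1 = m2 by lia.
split => //; apply: partition_eq => // i.
case: (ltngtP i d.-1) => [lt_i|gt_i|-> //].
- by have := step1 i.+1; have := step2 i.+1; rewrite /=; lia.
- by rewrite !nth_default //; lia.
Qed.

Definition on_boundary (lam : seq nat) (x y : nat) : bool :=
  in_F lam x y && ~~ in_F lam x.+1 y.+1.

Section YoungDiagram.
Variable lam : seq nat.
Hypothesis lam_part : is_partition lam.

Let lam_sorted : sorted geq lam. Proof. by case/andP: lam_part. Qed.

Lemma in_F_le x y x' y' : in_F lam x y -> x' <= x -> y' <= y -> in_F lam x' y'.
Proof.
case/andP=> le_y le_x le_x' le_y'; apply/andP; split; first exact: leq_trans le_y.
by apply: leq_trans le_x' (leq_trans le_x (nth_sorted_geq _ _)); rewrite // -!subn1 leq_sub2r.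
Qed.

Lemma in_F_head x y : in_F lam x y -> x <= head 0 lam.
Proof. by case/andP=> _ /leq_trans; apply; rewrite -nth0 nth_sorted_geq. Qed.

Lemma in_F_size x y : in_F lam x y -> y <= size lam.
Proof. by case/andP. Qed.

Lemma on_boundary_bpt k : 0 < size lam -> k <= blen lam ->
  on_boundary lam (bpt lam k).1 (bpt lam k).2 /\
  head 0 lam + (bpt lam k).2 = k + (bpt lam k).1.
Proof.
move=> lam_nil0; elim: k => [_|k IHk lt_k].
  by rewrite /on_boundary /in_F /= -nth0 leqnn ltnn andbF addn0.
have [/andP[in_xy out_xy] level] := IHk (ltnW lt_k).
rewrite [bpt _ _]/= -/(bpt lam k); move: in_xy out_xy level lt_k.
case: (bpt lam k) => x y /= in_xy out_xy level lt_k; rewrite /bstep.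
case: ifP => [/andP[lt_y le_x] | up_fails] /=.
  split; last by rewrite addnS level.
  rewrite /on_boundary /in_F /= lt_y le_x /= negb_and -ltnNge -leqNgt.
  move: out_xy; rewrite /in_F /= lt_y /= -ltnNge => lt_x.
  by apply/orP; right; apply: leq_trans (nth_sorted_geq _ (leqnSn y)) _.
have x_gt0 : 0 < x.
  move: (in_F_size in_xy) up_fails; case: x {in_xy out_xy} level => // level le_y.
  by rewrite leq0n andbT => /negbT; rewrite -leqNgt; move: lt_k; rewrite /blen; lia.
split; last by lia.
by rewrite /on_boundary prednK // (in_F_le in_xy) ?leq_pred // /in_F /= up_fails.
Qed.

Lemma on_boundary_level x y x' y' : on_boundary lam x y -> on_boundary lam x' y' ->
  x + y' = x' + y -> x = x' /\ y = y'.
Proof.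
move=> /andP[in_xy out_xy] /andP[in_xy' out_xy'] level.
case: (ltngtP x x') => [lt_x|lt_x|eq_x]; last by split; lia.
- by move: out_xy; rewrite (in_F_le in_xy') //; lia.
- by move: out_xy'; rewrite (in_F_le in_xy) //; lia.
Qed.

Lemma bpt_on_boundary x y : 0 < size lam -> on_boundary lam x y ->
  bpt lam (head 0 lam - x + y) = (x, y).
Proof.
move=> lam_nil0 bd_xy; have /andP[in_xy _] := bd_xy.
have le_k : head 0 lam - x + y <= blen lam.
  by move: (in_F_head in_xy) (in_F_size in_xy); rewrite /blen; lia.
have [bd_k level] := on_boundary_bpt lam_nil0 le_k.
have [] := on_boundary_level bd_k bd_xy; first by move: (in_F_head in_xy); lia.
by case: (bpt lam _) => /= ? ? -> ->.
Qed.

Lemma boundary_is_val P T x y : 0 < size lam -> boundary_is lam P T ->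
  on_boundary lam x y -> P x y = nth [::] T (head 0 lam - x + y).
Proof.
move=> lam_nil0 bd_PT bd_xy; have /andP[in_xy _] := bd_xy.
rewrite -bd_PT ?bpt_on_boundary //.
by move: (in_F_head in_xy) (in_F_size in_xy); rewrite /blen; lia.
Qed.

End YoungDiagram.

Definition up_step (lam : seq nat) (k : nat) : bool := (bpt lam k).2 < (bpt lam k.+1).2.

Lemma bword_up_step lam : bword lam = map (up_step lam) (iota 0 (blen lam)).
Proof. by []. Qed.

Lemma count_up_step lam k : count (up_step lam) (iota 0 k) = (bpt lam k).2.
Proof.
elim: k => // k IHk; rewrite -addn1 iotaD count_cat IHk /= addn0 add0n addn1.
rewrite /up_step [bpt _ k.+1]/= -/(bpt lam k); case: (bpt lam k) => x y /=.
by rewrite /bstep; case: ifP => _ /=; rewrite ?ltnSn ?ltnn ?addn1 ?addn0.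
Qed.

Lemma pos_plus_map (p : pred nat) n : pos_plus (map p (iota 0 n)) = filter p (iota 0 n).
Proof.
rewrite /pos_plus size_map size_iota; apply: eq_in_filter => k.
by rewrite mem_iota => /andP[_ lt_k]; rewrite (nth_map 0) ?size_iota // nth_iota.
Qed.

Lemma pos_minus_map (p : pred nat) n :
  pos_minus (map p (iota 0 n)) = filter (predC p) (iota 0 n).
Proof.
rewrite /pos_minus size_map size_iota; apply: eq_in_filter => k.
by rewrite mem_iota => /andP[_ lt_k]; rewrite (nth_map 0) ?size_iota // nth_iota.
Qed.

Lemma nth_filter_iota (p : pred nat) n k : p k -> k < n ->
  nth 0 (filter p (iota 0 n)) (count p (iota 0 k)) = k.
Proof.
move=> p_k lt_k; have -> : n = k + (n - k).-1.+1 by lia.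
by rewrite iotaD filter_cat nth_cat size_filter ltnn subnn add0n /= p_k.
Qed.

Lemma size_bword lam : size (bword lam) = blen lam.
Proof. by rewrite size_map size_iota. Qed.

Lemma nth_pos_plus_bword lam k : up_step lam k -> k < blen lam ->
  nth 0 (pos_plus (bword lam)) (bpt lam k).2 = k.
Proof.
by move=> up_k lt_k; rewrite bword_up_step pos_plus_map -count_up_step nth_filter_iota.
Qed.

Lemma count_left_step lam k : count (predC (up_step lam)) (iota 0 k) = k - (bpt lam k).2.
Proof. by have := count_predC (up_step lam) (iota 0 k); rewrite size_iota count_up_step; lia. Qed.

Lemma nth_pos_minus_bword lam k : ~~ up_step lam k -> k < blen lam ->
  nth 0 (pos_minus (bword lam)) (k - (bpt lam k).2) = k.
Proof.
by move=> left_k lt_k; rewrite bword_up_step pos_minus_map -count_left_step nth_filter_iota.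
Qed.

Lemma size_pos_minus_bword lam : is_partition lam -> 0 < size lam ->
  size (pos_minus (bword lam)) = head 0 lam.
Proof.
move=> lam_part lam_nil0; have bd_end : on_boundary lam 0 (size lam).
  by rewrite /on_boundary /in_F leqnn ltnn.
rewrite bword_up_step pos_minus_map size_filter count_left_step.
by move: (bpt_on_boundary lam_part lam_nil0 bd_end); rewrite subn0 => -> /=; rewrite addnK.
Qed.

Lemma nth_conj_part (lam : seq nat) j :
  nth 0 (conj_part lam) j = if j < head 0 lam then count (fun a => j < a) lam else 0.
Proof.
rewrite /conj_part; case: ifP => lt_j; first by rewrite nth_mkseq.
by rewrite nth_default // size_mkseq leqNgt lt_j.
Qed.

Section Conjugate.
Variable lam : seq nat.
Hypotheses (lam_part : is_partition lam) (lam_nil0 : 0 < size lam).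

Let lam_sorted : sorted geq lam. Proof. by case/andP: lam_part. Qed.

Let count_gt0 : count (fun a => 0 < a) lam = size lam.
Proof. by apply/eqP; rewrite -all_count; case/andP: lam_part. Qed.

Lemma head_conj_part : head 0 (conj_part lam) = size lam.
Proof. by rewrite -nth0 nth_conj_part -nth0 partition_nth_gt0 // lam_nil0. Qed.

Lemma conj_part_partition : is_partition (conj_part lam).
Proof.
apply/andP; split.
  apply/(sortedP 0) => i; rewrite size_mkseq => lt_i.
  by rewrite !nth_mkseq ?(ltnW lt_i) //; apply: sub_count => a /ltnW.
apply/(all_nthP 0) => j; rewrite size_mkseq => lt_j.
by rewrite nth_mkseq // count_geq_sorted // nth0.
Qed.

Lemma in_F_conj_part x y : in_F (conj_part lam) x y = in_F lam y x.
Proof.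
rewrite /in_F size_mkseq nth_conj_part.
case: y => [|y] /=.
  by rewrite -nth0 partition_nth_gt0 // lam_nil0 count_gt0 leq0n andbT.
case: x => [|x] /=; first by rewrite !leq0n andbT nth0.
case: (ltnP y (head 0 lam)) => [lt_y|ge_y] /=.
  rewrite count_geq_sorted //; case le_y: (y < nth 0 lam x); rewrite ?andbT ?andbF //.
  by rewrite -(partition_nth_gt0 _ lam_part) (leq_ltn_trans _ le_y).
apply/esym/negbTE; rewrite negb_and -!leqNgt; apply/orP; right.
by rewrite (leq_trans (nth_sorted_geq lam_sorted (leq0n x))) // nth0.
Qed.

Lemma cell_F_conj_part i j : cell_F (conj_part lam) i j = cell_F lam j i.
Proof.
suff cell_F_in_F mu a b : cell_F mu a b = [&& 0 < a, 0 < b & in_F mu b a].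
  by rewrite !cell_F_in_F in_F_conj_part andbCA.
by rewrite /cell_F /in_F; case: a => [|a] //; case: b => [|b] //=; rewrite andbC.
Qed.

Lemma on_boundary_conj_part x y : on_boundary (conj_part lam) x y = on_boundary lam y x.
Proof. by rewrite /on_boundary !in_F_conj_part. Qed.

End Conjugate.

Section GrowthDiagram.
Variables (rule : seq nat -> seq nat -> seq nat -> seq nat -> nat -> Prop)
  (ispart : seq nat -> bool).
Hypothesis rule_balance : forall kappa mu nu rho m,
  rule kappa mu nu rho m -> psize rho + psize kappa = m + psize mu + psize nu.
Hypothesis rule_sym : forall kappa mu nu rho m,
  rule kappa mu nu rho m -> rule kappa nu mu rho m.
Hypothesis rule_inj : forall kappa1 kappa2 mu nu rho m1 m2,
  ispart kappa1 -> ispart kappa2 ->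
  rule kappa1 mu nu rho m1 -> rule kappa2 mu nu rho m2 -> kappa1 = kappa2 /\ m1 = m2.

Lemma growth_diagram_eq_in_F lam P1 f1 P2 f2 : is_partition lam ->
  growth_diagram rule ispart lam P1 f1 -> growth_diagram rule ispart lam P2 f2 ->
  (forall x y, on_boundary lam x y -> P1 x y = P2 x y) ->
  forall x y, in_F lam x y -> P1 x y = P2 x y.
Proof.
move=> lam_part [part1 _ rule1] [part2 _ rule2] eq_bd.
(* A point off the boundary is the bottom-left corner of a cell whose other three corners
   are closer to the far corner (head lam, size lam). *)
suff eq_below n x y : head 0 lam - x + (size lam - y) <= n -> in_F lam x y -> P1 x y = P2 x y.
  by move=> x y; apply: eq_below.
elim: n x y => [|n IHn] x y le_n in_xy.
all: have [in_xy1|out_xy1] := boolP (in_F lam x.+1 y.+1); last by apply: eq_bd; apply/andP.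
all: have [le_x le_y] := (in_F_head lam_part in_xy1, in_F_size in_xy1).
  by move: le_n le_x le_y; lia.
have cell_xy : cell_F lam y.+1 x.+1 by [].
have eq_mu : P1 x y.+1 = P2 x y.+1 by apply: IHn; [lia | exact: in_F_le in_xy1 _ _].
have eq_nu : P1 x.+1 y = P2 x.+1 y by apply: IHn; [lia | exact: in_F_le in_xy1 _ _].
have eq_rho : P1 x.+1 y.+1 = P2 x.+1 y.+1 by apply: IHn; first lia.
have := rule1 _ _ cell_xy; have := rule2 _ _ cell_xy; rewrite /= eq_mu eq_nu eq_rho.
by move=> r2 r1; case: (rule_inj (part1 _ _ in_xy) (part2 _ _ in_xy) r1 r2).
Qed.

Lemma growth_diagram_eq_filling lam P1 f1 P2 f2 : is_partition lam ->
  growth_diagram rule ispart lam P1 f1 -> growth_diagram rule ispart lam P2 f2 ->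
  (forall x y, on_boundary lam x y -> P1 x y = P2 x y) ->
  forall i j, cell_F lam i j -> f1 i j = f2 i j.
Proof.
move=> lam_part gd1 gd2 eq_bd i j cell_ij.
have eq_P := growth_diagram_eq_in_F lam_part gd1 gd2 eq_bd.
case: gd1 gd2 => [part1 _ rule1] [part2 _ rule2].
have /andP[/andP[i_gt0 le_i] /andP[j_gt0 le_j]] := cell_ij.
have in_ji : in_F lam j i by apply/andP.
have in_corner x y : x <= j -> y <= i -> in_F lam x y by move=> *; apply: in_F_le in_ji _ _.
have part_kappa := part2 _ _ (in_corner _ _ (leq_pred j) (leq_pred i)).
have := rule1 _ _ cell_ij; rewrite !eq_P ?in_corner ?leq_pred // => r1.
by case: (rule_inj part_kappa part_kappa r1 (rule2 _ _ cell_ij)).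
Qed.

Lemma growth_diagram_transpose lam P f : is_partition lam -> 0 < size lam ->
  growth_diagram rule ispart lam P f ->
  growth_diagram rule ispart (conj_part lam) (fun x y => P y x) (fun i j => f j i).
Proof.
move=> lam_part lam_nil0 [part axes cells]; split=> [x y|x y|i j].
- by rewrite in_F_conj_part //; apply: part.
- by rewrite in_F_conj_part // orbC; apply: axes.
- by rewrite cell_F_conj_part // => /cells /rule_sym.
Qed.

Lemma growth_row_psize lam P f i j : is_partition lam ->
  growth_diagram rule ispart lam P f -> 0 < i -> in_F lam j i ->
  psize (P j i) = \sum_(1 <= j' < j.+1) f i j' + psize (P j i.-1).
Proof.
move=> lam_part [_ axes cells] i_gt0; elim: j => [in_0i|j IHj in_ji].
  by rewrite big_geq // !axes // (in_F_le lam_part in_0i) ?leq_pred.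
have cell_ij : cell_F lam i j.+1 by move: in_ji; rewrite /cell_F /in_F i_gt0.
rewrite big_nat_recr //=; have := IHj (in_F_le lam_part in_ji (leqnSn j) (leqnn i)).
by have := rule_balance (cells _ _ cell_ij); rewrite /=; lia.
Qed.

Lemma growth_column_psize lam P f i j : is_partition lam -> 0 < size lam ->
  growth_diagram rule ispart lam P f -> 0 < j -> in_F lam j i ->
  psize (P j i) = \sum_(1 <= i' < i.+1) f i' j + psize (P j.-1 i).
Proof.
move=> lam_part lam_nil0 gd j_gt0; rewrite -in_F_conj_part // => in_ij.
exact: (growth_row_psize (conj_part_partition lam_part)
          (growth_diagram_transpose lam_part lam_nil0 gd) j_gt0 in_ij).
Qed.

Section RowColumnSums.
Variables (lam : seq nat) (T : seq (seq nat)) (P : nat -> nat -> seq nat) (f : nat -> nat -> nat).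
Hypotheses (lam_part : is_partition lam) (lam_nil0 : 0 < size lam).
Hypotheses (gd : growth_diagram rule ispart lam P f) (bd : boundary_is lam P T).

Let lam_sorted : sorted geq lam. Proof. by case/andP: lam_part. Qed.

Lemma growth_row_sum i : 0 < i <= size lam ->
  \sum_(1 <= j < (nth 0 lam i.-1).+1) f i j = wt_plus (bword lam) T i.
Proof.
case/andP=> i_gt0 le_i; set L := nth 0 lam i.-1.
have in_Li : in_F lam L i by rewrite /in_F le_i leqnn.
have le_L : L <= head 0 lam by apply: in_F_head in_Li.
have bd_top : on_boundary lam L i.
  rewrite /on_boundary in_Li /in_F /= negb_and -!ltnNge; apply/orP; right.
  by rewrite ltnS (nth_sorted_geq lam_sorted (leq_pred i)).
have bd_bot : on_boundary lam L i.-1.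
  by rewrite /on_boundary (in_F_le lam_part in_Li) ?leq_pred //= prednK // /in_F ltnn andbF.
(* (L, i-1) and (L, i) are the ends of boundary step k, which is the i-th up step. *)
set k := head 0 lam - L + i.-1.
have bpt_k : bpt lam k = (L, i.-1) by apply: bpt_on_boundary.
have bpt_k1 : bpt lam k.+1 = (L, i).
  by rewrite -(bpt_on_boundary lam_part lam_nil0 bd_top) /k; congr bpt; lia.
have lt_k : k < blen lam by rewrite /k /blen; lia.
have up_k : up_step lam k by rewrite /up_step bpt_k bpt_k1 /= prednK.
rewrite /wt_plus -[i.-1]/((L, i.-1).2) -bpt_k nth_pos_plus_bword //.
rewrite -!bd ?(ltnW lt_k) // bpt_k bpt_k1 /= (growth_row_psize lam_part gd) //.
by rewrite addnK.
Qed.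

Lemma growth_column_sum j : 0 < j <= head 0 lam ->
  \sum_(1 <= i < (size lam).+1 | j <= nth 0 lam i.-1) f i j = wt_minus (bword lam) T j.
Proof.
case/andP=> j_gt0 le_j; set c := count (fun a => j <= a) lam.
have lt_c i : (i < c) = (j <= nth 0 lam i) by apply: count_geq_sorted.
have le_c : c <= size lam by apply: count_size.
have c_gt0 : 0 < c by rewrite lt_c nth0.
have in_jc : in_F lam j c by rewrite /in_F le_c -lt_c ltn_predL.
have bd_right : on_boundary lam j c.
  rewrite /on_boundary in_jc /in_F /= negb_and; apply/orP; right.
  by rewrite -leqNgt ltnW // ltnNge -lt_c ltnn.
have bd_left : on_boundary lam j.-1 c.
  rewrite /on_boundary (in_F_le lam_part in_jc) ?leq_pred //= prednK //.
  by rewrite /in_F /= -lt_c ltnn andbF.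
(* (j, c) and (j-1, c) are the ends of boundary step k, the j-th left step from the end. *)
set k := head 0 lam - j + c.
have bpt_k : bpt lam k = (j, c) by apply: bpt_on_boundary.
have bpt_k1 : bpt lam k.+1 = (j.-1, c).
  by rewrite -(bpt_on_boundary lam_part lam_nil0 bd_left) /k; congr bpt; lia.
have lt_k : k < blen lam by rewrite /k /blen; lia.
have left_k : ~~ up_step lam k by rewrite /up_step bpt_k bpt_k1 ltnn.
have -> : \sum_(1 <= i < (size lam).+1 | j <= nth 0 lam i.-1) f i j = \sum_(1 <= i < c.+1) f i j.
  rewrite (big_nat_widen _ _ _ _ _ (_ : c.+1 <= (size lam).+1)) // big_nat_cond.
  by rewrite [RHS]big_nat_cond; apply: eq_bigl => -[|i] //=; rewrite !ltnS -lt_c.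
rewrite /wt_minus nth_rev size_pos_minus_bword //; last lia.
have -> : head 0 lam - j.-1.+1 = k - (bpt lam k).2 by rewrite bpt_k /k /=; lia.
rewrite nth_pos_minus_bword // -!bd ?(ltnW lt_k) // bpt_k bpt_k1 /=.
by rewrite (growth_column_psize lam_part lam_nil0 gd) // addnK.
Qed.

End RowColumnSums.

Lemma growth_diagram_reflect lam T P f P' f' : is_partition lam -> 0 < size lam ->
  size T = (blen lam).+1 ->
  growth_diagram rule ispart lam P f -> boundary_is lam P T ->
  growth_diagram rule ispart (conj_part lam) P' f' -> boundary_is (conj_part lam) P' (rev T) ->
  forall i j, cell_F (conj_part lam) i j -> f' i j = f j i.
Proof.
move=> lam_part lam_nil0 size_T gd bd gd' bd'.
have conj_part' := conj_part_partition lam_part.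
have conj_nil0 : 0 < size (conj_part lam) by rewrite size_mkseq -nth0 partition_nth_gt0.
apply: (growth_diagram_eq_filling conj_part' gd' (growth_diagram_transpose lam_part lam_nil0 gd)).
move=> x y bd_xy; have bd_yx : on_boundary lam y x by rewrite -on_boundary_conj_part.
have /andP[in_yx _] := bd_yx.
have [le_y le_x] := (in_F_head lam_part in_yx, in_F_size in_yx).
rewrite (boundary_is_val conj_part' conj_nil0 bd' bd_xy).
rewrite (boundary_is_val lam_part lam_nil0 bd bd_yx).
rewrite head_conj_part // nth_rev size_T; last by rewrite /blen; lia.
by congr nth; rewrite /blen; lia.
Qed.

Lemma prop34_for_rule : prop34_for rule ispart.
Proof.
move=> lam w T lam_part lam_nil0 -> [size_T _ _ _ _] P f gd bd.
rewrite size_bword in size_T; split; first split.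
- exact: growth_row_sum lam_part lam_nil0 gd bd.
- exact: growth_column_sum lam_part lam_nil0 gd bd.
- move=> P' f' gd' bd'; exact: growth_diagram_reflect lam_part lam_nil0 size_T gd bd gd' bd'.
Qed.

End GrowthDiagram.

Theorem proposition3p4 :
  (forall d : nat, 0 < d -> prop34_for (dRSK_rule d) (is_dpartition d)) /\
  prop34_for RSK_rule is_partition.
Proof.
split=> [d d_gt0|]; apply: prop34_for_rule.
- by move=> kappa mu nu rho m; apply: dRSK_rule_balance.
- by move=> kappa mu nu rho m; apply: dRSK_rule_sym.
- by move=> kappa1 kappa2 mu nu rho m1 m2; apply: dRSK_rule_inj.
- by move=> kappa mu nu rho m; apply: RSK_rule_balance.
- by move=> kappa mu nu rho m; apply: RSK_rule_sym.
- by move=> kappa1 kappa2 mu nu rho m1 m2; apply: RSK_rule_inj.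
Qed.
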